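(* Let $n\ge 4$, $N=\{1,\dots,n\}$, fix distinct $i_1,i_2\in N$ and let $\hat N^c=N\setminus\{i_1,i_2\}$. Then the inequality $$\sum_{j\in\hat N^c}\left(x_{i_1j}+x_{ji_1}+x_{ji_2}\right)-x_{i_1i_2}-\sum_{j,j'\in\hat N^c:\,j\ne j'} x_{jj'}\le 3-\frac{(n-4)(n-5)}{2}$$ is a valid inequality for the weak order polytope $P^n_{WO}$, i.e. it holds for every point $x\in P^n_{WO}$.
   Context: Let $N=\{1,\dots,n\}$ and $A_N=\{(i,j): i,j\in N, i\ne j\}$. A weak order on $N$ is a binary relation $W\subseteq N\times N$ that is reflexive, transitive and total; $(i,j)\in W$ is read ''$i$ is preferred over or tied with $j$''. The characteristic vector of $W$ is $x^W\in\{0,1\}^{A_N}$ with $x^W_{(i,j)}=1$ if $(i,j)\in W$ and $0$ otherwise. The weak order polytope $P^n_{WO}$ is the convex hull of the characteristic vectors of all weak orders on $N$; its points are vectors $x\in\mathbb{R}^{A_N}$ and $x_{ij}$ denotes the coordinate $x_{(i,j)}$. *)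

From mathcomp Require Import all_boot all_order all_algebra.
Set Implicit Arguments. Unset Strict Implicit. Unset Printing Implicit Defensive.
Import Order.TTheory GRing.Theory Num.Theory.
Local Open Scope ring_scope.

(* N = {1,...,n} is represented by 'I_n = {0,...,n-1}. *)

Definition weak_order (n : nat) (W : rel 'I_n) : Prop :=
  reflexive W /\ transitive W /\ total W.

(* Points of R^{A_N} are represented as functions x : 'I_n -> 'I_n -> R;
   only the off-diagonal entries x i j (i != j) are coordinates.
   x lies in the weak order polytope P^n_WO iff it is a convex combination
   of characteristic vectors of weak orders (on the coordinates in A_N). *)
Definition in_weak_order_polytope (R : realFieldType) (n : nat)
    (x : 'I_n -> 'I_n -> R) : Prop :=
  exists (k : nat) (lam : 'I_k -> R) (Ws : 'I_k -> rel 'I_n),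
    (forall t, weak_order (Ws t)) /\
    (forall t, 0 <= lam t) /\
    (\sum_(t < k) lam t = 1) /\
    (forall i j : 'I_n, i != j -> x i j = \sum_(t < k) lam t * (Ws t i j)%:R).

(** A linear inequality is valid on a polytope as soon as it holds at the vertices,
    so it suffices to check it at the characteristic vector of a weak order [W].
    Let [m = n - 2] and let [T] be the set of [j] outside [{i1, i2}] that are tied
    with [i1] and weakly preferred to [i2], [t = #|T|].  Each [j] contributes at
    most [2 + [j \in T]] to the first sum.  Every unordered pair [{j, j'}] outside
    [{i1, i2}] contributes at least [1] to the double sum, by totality, and pairs
    inside [T] contribute [2], by transitivity through [i1]; so the double sum is at
    least [C(m,2) + C(t,2)].  If [t > 0] then [i1] is weakly preferred to [i2].  As
    [3 - (n-4)(n-5)/2 = 2m - C(m,2)], what is left is [t - [t > 0] <= C(t,2)]. *)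

From mathcomp Require Import all_boot all_order all_algebra.
From mathcomp Require Import zify lra.
Set Implicit Arguments. Unset Strict Implicit. Unset Printing Implicit Defensive.
Import Order.TTheory GRing.Theory Num.Theory.
Local Open Scope ring_scope.

Section OffdiagLinear.
Variables (R : realFieldType) (n : nat).

Definition offdiag_linear (F : ('I_n -> 'I_n -> R) -> R) : Prop :=
  forall k (lam : 'I_k -> R) (y : 'I_k -> 'I_n -> 'I_n -> R) (x : 'I_n -> 'I_n -> R),
    (forall i j, i != j -> x i j = \sum_(t < k) lam t * y t i j) ->
    F x = \sum_(t < k) lam t * F (y t).

Lemma offdiag_linear_coord (i j : 'I_n) : i != j -> offdiag_linear (fun x => x i j).
Proof. by move=> ij k lam y x Hx; apply: Hx. Qed.

Lemma offdiag_linearD (F G : ('I_n -> 'I_n -> R) -> R) :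
  offdiag_linear F -> offdiag_linear G -> offdiag_linear (fun x => F x + G x).
Proof.
move=> linF linG k lam y x Hx; rewrite (linF _ _ _ _ Hx) (linG _ _ _ _ Hx) -big_split.
by apply: eq_bigr => t _; rewrite mulrDr.
Qed.

Lemma offdiag_linearB (F G : ('I_n -> 'I_n -> R) -> R) :
  offdiag_linear F -> offdiag_linear G -> offdiag_linear (fun x => F x - G x).
Proof.
move=> linF linG k lam y x Hx; rewrite (linF _ _ _ _ Hx) (linG _ _ _ _ Hx) -sumrB.
by apply: eq_bigr => t _; rewrite mulrBr.
Qed.

Lemma offdiag_linear_sum (I : finType) (P : pred I) (F : I -> ('I_n -> 'I_n -> R) -> R) :
  (forall a, P a -> offdiag_linear (F a)) ->
  offdiag_linear (fun x => \sum_(a | P a) F a x).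
Proof.
move=> linF k lam y x Hx; rewrite (eq_bigr _ (fun a Pa => linF a Pa _ _ _ _ Hx)).
by rewrite exchange_big; apply: eq_bigr => t _; rewrite mulr_sumr.
Qed.

Lemma valid_on_weak_order_polytope (F : ('I_n -> 'I_n -> R) -> R) (b : R) x :
  offdiag_linear F ->
  (forall W : rel 'I_n, weak_order W -> F (fun i j => (W i j)%:R) <= b) ->
  in_weak_order_polytope x -> F x <= b.
Proof.
move=> linF Fvert [k [lam [Ws [Wwo [lam_ge0 [lam_sum1 Hx]]]]]].
rewrite (linF _ _ _ _ Hx); apply: le_trans (_ : \sum_(t < k) lam t * b <= b).
  by apply: ler_sum => t _; apply: ler_wpM2l; [apply: lam_ge0 | apply: Fvert].
by rewrite -mulr_suml lam_sum1 mul1r.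
Qed.

End OffdiagLinear.

Definition wo_ineq_lhs (R : realFieldType) (n : nat) (i1 i2 : 'I_n)
    (x : 'I_n -> 'I_n -> R) : R :=
  \sum_(j : 'I_n | (j != i1) && (j != i2)) (x i1 j + x j i1 + x j i2)
    - x i1 i2
    - \sum_(j : 'I_n | (j != i1) && (j != i2))
        \sum_(j' : 'I_n | [&& j' != i1, j' != i2 & j' != j]) x j j'.

Lemma wo_ineq_lhs_offdiag_linear (R : realFieldType) (n : nat) (i1 i2 : 'I_n) :
  i1 != i2 -> offdiag_linear (@wo_ineq_lhs R n i1 i2).
Proof.
move=> i12; apply: offdiag_linearB; first apply: offdiag_linearB.
- apply: offdiag_linear_sum => j /andP[ji1 ji2].
  by apply: offdiag_linearD; [apply: offdiag_linearD|];
    apply: offdiag_linear_coord; rewrite // eq_sym.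
- exact: offdiag_linear_coord.
- apply: offdiag_linear_sum => j _; apply: offdiag_linear_sum => j' /and3P[_ _ j'j].
  by apply: offdiag_linear_coord; rewrite eq_sym.
Qed.

Section TotalRelationPairs.
Variables (T : finType) (W : rel T).
Hypothesis W_total : total W.

Lemma sum_indicator (A B : {pred T}) :
  {subset B <= A} -> (\sum_(j in A) (j \in B) = #|B|)%N.
Proof.
move=> BA; rewrite -big_mkcondr /= -sum1_card.
by apply: eq_bigl => j; case: (boolP (j \in B)) => [/BA -> | _]; rewrite ?andbF.
Qed.

(* [C(#|A|,2) + C(#|B|,2) <=] the double sum, without division: by totality each
   unordered pair in [A] counts at least once, and each pair inside [B] twice. *)
Lemma offdiag_pairs_lower_bound (A B : {pred T}) :
  {subset B <= A} -> {in B &, forall j j', W j j'} ->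
  (#|A| * #|A| + #|B| * #|B|
     <= 2 * \sum_(j in A) \sum_(j' in A | j' != j) W j j' + #|A| + #|B|)%N.
Proof.
move=> BA WB.
pose g j j' := (1 + ((j \in B) && (j' \in B)))%N.
have sym : (2 * \sum_(j in A) \sum_(j' in A | j' != j) W j j'
            = \sum_(j in A) \sum_(j' in A | j' != j) (W j j' + W j' j))%N.
  rewrite mul2n -addnn [in RHS](eq_bigr _ (fun j _ => big_split _ _ _ _ _)) big_split /=.
  congr (_ + _)%N; rewrite (exchange_big_dep (mem A)) /=; last by move=> j j' _ /andP[].
  by apply: eq_bigr => j Aj; apply: eq_bigl => j'; rewrite Aj eq_sym.
have g_le : (\sum_(j in A) \sum_(j' in A | j' != j) g j j'
             <= \sum_(j in A) \sum_(j' in A | j' != j) (W j j' + W j' j))%N.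
  apply: leq_sum => j _; apply: leq_sum => j' _; rewrite /g.
  case: (boolP ((j \in B) && (j' \in B))) => [/andP[Bj Bj'] | _].
    by rewrite (WB j j') // (WB j' j).
  by case: (W j j') (W j' j) (W_total j j') => [] [].
have row_g j : j \in A ->
    (\sum_(j' in A | j' != j) g j j' + g j j = #|A| + (j \in B) * #|B|)%N.
  move=> Aj; rewrite addnC -(bigD1 j Aj) big_split /= sum1_card.
  by case: (j \in B) => /=; rewrite ?mul1n ?sum_indicator // big1.
have sum_g : (\sum_(j in A) \sum_(j' in A | j' != j) g j j' + #|A| + #|B|
              = #|A| * #|A| + #|B| * #|B|)%N.
  have gjj : (\sum_(j in A) g j j = #|A| + #|B|)%N.
    rewrite (eq_bigr (fun j => 1 + (j \in B))%N) => [|j _]; last by rewrite /g andbb.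
    by rewrite big_split /= sum1_card sum_indicator.
  rewrite -addnA -gjj -big_split /= (eq_bigr _ row_g) big_split /= sum_nat_const.
  by rewrite -big_distrl /= sum_indicator.
by rewrite sym -sum_g leq_add2r leq_add2r.
Qed.

End TotalRelationPairs.

Section WeakOrderVertex.
Variables (n : nat) (W : rel 'I_n) (i1 i2 : 'I_n).
Hypotheses (W_trans : transitive W) (W_total : total W).

Definition others : pred 'I_n := [pred j | (j != i1) && (j != i2)].

Definition ties_of_i1 : pred 'I_n :=
  [pred j | (j \in others) && [&& W i1 j, W j i1 & W j i2]].

Lemma card_others : i1 != i2 -> #|others| = (n - 2)%N.
Proof.
move=> i12; have := cardC (pred2 i1 i2); rewrite card2 i12 card_ord.
have -> : #|[predC pred2 i1 i2]| = #|others| by apply: eq_card => j; rewrite !inE negb_or.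
lia.
Qed.

Lemma ties_of_i1_pairwise : {in ties_of_i1 &, forall j j', W j j'}.
Proof.
move=> j j' /andP[_ /and3P[_ ji1 _]] /andP[_ /and3P[i1j' _ _]].
exact: W_trans ji1 i1j'.
Qed.

Lemma ties_of_i1_pref : (0 < #|ties_of_i1|)%N -> W i1 i2.
Proof. by case/card_gt0P => j /andP[_ /and3P[i1j _ ji2]]; apply: W_trans i1j ji2. Qed.

Lemma sum_others_le :
  (\sum_(j in others) (W i1 j + W j i1 + W j i2)
     <= 2 * #|others| + #|ties_of_i1|)%N.
Proof.
apply: (@leq_trans (\sum_(j in others) (2 + (j \in ties_of_i1)))).
  apply: leq_sum => j oj; rewrite inE oj /=.
  by case: (W i1 j); case: (W j i1); case: (W j i2).
by rewrite big_split /= sum_nat_const mulnC sum_indicator // => j /andP[].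
Qed.

(* Twice the inequality at the vertex [W], in [nat], with [n = #|others| + 2]. *)
Lemma wo_vertex_count :
  (2 * \sum_(j in others) (W i1 j + W j i1 + W j i2) + #|others| * #|others|
     <= 5 * #|others| + 2 * W i1 i2
        + 2 * \sum_(j in others) \sum_(j' in others | j' != j) W j j')%N.
Proof.
have pairs := offdiag_pairs_lower_bound W_total
  (fun j (tj : j \in ties_of_i1) => proj1 (andP tj)) ties_of_i1_pairwise.
have lin := sum_others_le.
have ties : (3 * #|ties_of_i1| <= 2 * W i1 i2 + #|ties_of_i1| * #|ties_of_i1|)%N.
  case: (posnP #|ties_of_i1|) => [-> // | /ties_of_i1_pref ->].
  by case: #|ties_of_i1| => [|[|t]] //; nia.
(* The hypotheses state these quantities up to convertible but syntactically
   different [mem] coercions, which [lia] would read as distinct atoms. *)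
move: pairs lin ties.
move: (\sum_(j in others) \sum_(j' in others | j' != j) W j j')%N => P.
move: (\sum_(j in others) (W i1 j + W j i1 + W j i2))%N => L.
move: #|others| #|ties_of_i1| (nat_of_bool (W i1 i2)) => m t w.
lia.
Qed.

Lemma wo_ineq_vertex_le (R : realFieldType) :
  (4 <= n)%N -> i1 != i2 ->
  wo_ineq_lhs i1 i2 (fun i j => (W i j)%:R : R) <= 3 - ((n%:R - 4) * (n%:R - 5)) / 2.
Proof.
move=> n4 i12.
have lin_R : \sum_(j | (j != i1) && (j != i2)) ((W i1 j)%:R + (W j i1)%:R + (W j i2)%:R)
             = (\sum_(j in others) (W i1 j + W j i1 + W j i2))%N%:R :> R.
  by rewrite natr_sum; apply: eq_bigr => j _; rewrite !natrD.
have pairs_R : \sum_(j | (j != i1) && (j != i2))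
                 \sum_(j' | [&& j' != i1, j' != i2 & j' != j]) (W j j')%:R
               = (\sum_(j in others) \sum_(j' in others | j' != j) W j j')%N%:R :> R.
  rewrite natr_sum; apply: eq_bigr => j _; rewrite natr_sum.
  by apply: eq_bigl => j'; rewrite andbA.
have := wo_vertex_count; rewrite -(ler_nat R) !(natrD, natrM) card_others //.
rewrite natrB ?(leq_trans _ n4) // /wo_ineq_lhs lin_R pairs_R => count.
lra.
Qed.

End WeakOrderVertex.

Theorem mainTheorem6 (R : realFieldType) (n : nat) (i1 i2 : 'I_n)
    (x : 'I_n -> 'I_n -> R) :
  (4 <= n)%N -> i1 != i2 ->
  in_weak_order_polytope x ->
  \sum_(j : 'I_n | (j != i1) && (j != i2)) (x i1 j + x j i1 + x j i2)
    - x i1 i2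
    - \sum_(j : 'I_n | (j != i1) && (j != i2))
        \sum_(j' : 'I_n | [&& j' != i1, j' != i2 & j' != j]) x j j'
  <= 3 - ((n%:R - 4) * (n%:R - 5)) / 2.
Proof.
move=> n4 i12; rewrite -/(wo_ineq_lhs i1 i2 x).
apply: valid_on_weak_order_polytope; first exact: wo_ineq_lhs_offdiag_linear.
by move=> W [_ [W_trans W_total]]; apply: wo_ineq_vertex_le.
Qed.
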